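(* Let $f(u)=\sum_{j=0}^d a_ju^j$ be a real polynomial of degree $d\ge 2$ that is convex on $(0,\infty)$, strictly convex at $1$, and satisfies $f(1)=0$ and $f'(1)=0$. Then for any two probability densities $p,q$ (w.r.t. a common $\sigma$-finite measure $\mu$) for which the power chi pseudo-distances $\chi_i^\pm(p:q)$, $2\le i\le d$, are finite, the $f$-divergence has the finite chi expansion $$ I_f(p:q)=\sum_{i=2}^d\Big(\sum_{j=i}^d a_j\binom{j}{i}\Big)\chi_i^\pm(p:q). $$ Moreover, when $p=f(x;\theta_p)$ and $q=f(x;\theta_q)$ are members of the same affine exponential family with log-normalizer $F$, these quantities are finite and $I_f(p:q)$ is given in closed form by $$ I_f(p:q)=\sum_{i=2}^d\Big(\sum_{j=i}^d a_j\binom{j}{i}\Big)\sum_{s=0}^i(-1)^{i-s}\binom{i}{s}\exp\Big(F\big((1-s)\theta_p+s\theta_q\big)-\big((1-s)F(\theta_p)+sF(\theta_q)\big)\Big). $$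
   Context: For a convex $f:(0,\infty)\to\mathbb{R}$, the $f$-divergence between densities $p,q$ w.r.t. $\mu$ is $I_f(p:q)=\int p(x)f\big(\frac{q(x)}{p(x)}\big)\,d\mu(x)$ (with the usual conventions $0f(0/0)=0$ etc.). For integer $i\ge2$, the $i$-th power chi pseudo-distance is $\chi_i^\pm(p:q)=\int\frac{(q(x)-p(x))^i}{p(x)^{i-1}}\,d\mu(x)$. An exponential family consists of densities $f(x;\theta)=\exp(t(x)^\top\theta-F(\theta)+k(x))1_{\mathcal{X}}(x)$ with natural parameter space $\Theta=\{\theta:\int\exp(t(x)^\top\theta+k(x))d\mu<\infty\}$ and log-normalizer $F(\theta)=\log\int\exp(t(x)^\top\theta+k(x))d\mu$; it is an affine exponential family when $\Theta$ is affine (closed under affine combinations, e.g. $\Theta=\mathbb{R}^D$). *)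

From HB Require Import structures.
From mathcomp Require Import all_boot all_order all_algebra.
From mathcomp Require Import all_classical all_reals all_analysis.
Set Implicit Arguments. Unset Strict Implicit. Unset Printing Implicit Defensive.
Import Order.TTheory GRing.Theory Num.Theory.
Import numFieldNormedType.Exports.
Local Open Scope classical_set_scope.
Local Open Scope ring_scope.

Section Defs.
Context {R : realType}.

Definition convex_on_pos (f : R -> R) : Prop :=
  forall x y t : R, 0 < x -> 0 < y -> 0 <= t <= 1 ->
    f (t * x + (1 - t) * y) <= t * f x + (1 - t) * f y.

Definition strictly_convex_at1 (f : R -> R) : Prop :=
  forall x y t : R, 0 < x -> 0 < y -> x != y -> 0 < t < 1 ->
    t * x + (1 - t) * y = 1 -> f 1 < t * f x + (1 - t) * f y.

Definition fstar0 (f : R -> R) : \bar R :=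
  lim ((fun u : R => (f u / u)%:E) @ +oo%R).

Definition fdiv_integrand (f : R -> R) (p q : R) : \bar R :=
  if 0 < p then (p * f (q / p))%:E
  else if q == 0 then 0%E else (q%:E * fstar0 f)%E.

Definition fdiv {d} {T : measurableType d} (mu : {measure set T -> \bar R})
  (f : R -> R) (p q : T -> R) : \bar R :=
  (\int[mu]_x fdiv_integrand f (p x) (q x))%E.

Definition chi_integrand (i : nat) (p q : R) : \bar R :=
  if 0 < p then ((q - p) ^+ i / p ^+ i.-1)%:E
  else if q == 0 then 0%E else +oo%E.

Definition chi_pm {d} {T : measurableType d} (mu : {measure set T -> \bar R})
  (i : nat) (p q : T -> R) : \bar R :=
  (\int[mu]_x chi_integrand i (p x) (q x))%E.

Definition chi_pm_finite {d} {T : measurableType d}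
  (mu : {measure set T -> \bar R}) (i : nat) (p q : T -> R) : Prop :=
  mu.-integrable setT (fun x => chi_integrand i (p x) (q x)).

Definition is_density {d} {T : measurableType d}
  (mu : {measure set T -> \bar R}) (p : T -> R) : Prop :=
  [/\ measurable_fun setT p, (forall x, 0 <= p x) &
      (\int[mu]_x (p x)%:E = 1)%E].

(* exponential families: t : T -> R^D sufficient statistic, k carrier term,
   X support *)
Definition dotv (D : nat) (u v : 'rV[R]_D) : R := \sum_(i < D) u 0 i * v 0 i.

Definition ef_unnorm {d} {T : measurableType d} (D : nat)
  (t : T -> 'rV[R]_D) (k : T -> R) (X : set T) (th : 'rV[R]_D) (x : T) : R :=
  \1_X x * expR (dotv (t x) th + k x).

Definition natural_params {d} {T : measurableType d}
  (mu : {measure set T -> \bar R}) (D : nat)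
  (t : T -> 'rV[R]_D) (k : T -> R) (X : set T) : set 'rV[R]_D :=
  [set th | (\int[mu]_x (ef_unnorm t k X th x)%:E < +oo)%E].

Definition lognormalizer {d} {T : measurableType d}
  (mu : {measure set T -> \bar R}) (D : nat)
  (t : T -> 'rV[R]_D) (k : T -> R) (X : set T) (th : 'rV[R]_D) : R :=
  ln (fine (\int[mu]_x (ef_unnorm t k X th x)%:E)%E).

Definition ef_density {d} {T : measurableType d}
  (mu : {measure set T -> \bar R}) (D : nat)
  (t : T -> 'rV[R]_D) (k : T -> R) (X : set T) (th : 'rV[R]_D) (x : T) : R :=
  \1_X x * expR (dotv (t x) th - lognormalizer mu t k X th + k x).

Definition affine_set (D : nat) (S : set 'rV[R]_D) : Prop :=
  forall th1 th2 (l : R), S th1 -> S th2 -> S ((1 - l) *: th1 + l *: th2).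

End Defs.

(* Taylor expansion of the polynomial f at 1 has coefficients
   f^(i)(1)/i! = sum_(j >= i) a_j C(j, i), and f(1) = f'(1) = 0 removes the
   terms of order 0 and 1; hence pointwise
     p f(q/p) = sum_(i >= 2) f^(i)(1)/i! (q - p)^i / p^(i-1),
   and integrating term by term gives the chi expansion.  At p = 0 the
   conventions of both integrands agree except where q > 0, a set that the
   finiteness of chi_2 makes negligible.

   For an exponential family, the binomial theorem expands (q - p)^i / p^(i-1)
   into a signed combination of the unnormalized densities at the parameters
   (1 - s) theta_p + s theta_q, which stay in the natural parameter space
   because it is affine; the integral of each of them is exp F. *)

From HB Require Import structures.
From mathcomp Require Import all_boot all_order all_algebra.
From mathcomp Require Import all_classical all_reals all_analysis.
From mathcomp Require Import ring measurable_realfun.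
Import Order.TTheory GRing.Theory Num.Theory.
Import numFieldNormedType.Exports.
Local Open Scope classical_set_scope.
Local Open Scope ring_scope.

Section TaylorAtOne.
Context {R : comNzRingType} {P : {poly R}} {n : nat} (szP : (size P <= n)%N).

Lemma horner1_nderivn i : P^`N(i).[1] = \sum_(i <= j < n) P`_j * 'C(j, i)%:R.
Proof.
have szPi : (size P^`N(i) <= n - i)%N.
  exact: leq_trans (size_poly _ _) (leq_sub2r i szP).
rewrite (horner_coef_wide _ szPi) (big_addn 0 n i) big_mkord.
by apply: eq_bigr => j _; rewrite coef_nderivn expr1n mulr1 mulr_natr addnC.
Qed.

Lemma horner_taylor1 u : P.[u] = \sum_(i < n) P^`N(i).[1] * (u - 1) ^+ i.
Proof. by rewrite -(nderiv_taylor_wide (commr_sym (commr1 (u - 1))) szP) addrC subrK. Qed.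

Lemma horner_taylor1_flat u : P.[1] = 0 -> (P^`()).[1] = 0 ->
  P.[u] = \sum_(2 <= i < n) P^`N(i).[1] * (u - 1) ^+ i.
Proof.
move=> P1 dP1; rewrite horner_taylor1 (bigID (fun i : 'I_n => 2 <= i)%N).
rewrite big_geq_mkord /= [X in _ + X]big1 ?addr0 // => -[[|[|i]] ?] //= _.
  by rewrite nderivn0 P1 mul0r.
by rewrite nderivn1 dP1 mul0r.
Qed.

End TaylorAtOne.

Lemma mul_horner_div_chi {F : fieldType} {P : {poly F}} {n : nat} (a b : F) :
  (size P <= n)%N -> P.[1] = 0 -> (P^`()).[1] = 0 -> a != 0 ->
  a * P.[b / a] = \sum_(2 <= i < n) P^`N(i).[1] * ((b - a) ^+ i / a ^+ i.-1).
Proof.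
move=> szP P1 dP1 a_neq0; rewrite (horner_taylor1_flat szP _ P1 dP1) mulr_sumr.
apply: eq_big_nat => -[|i] /andP[i_gt1 _] //=.
have -> : b / a - 1 = (b - a) / a by field.
by rewrite expr_div_n [a ^+ i.+1]exprS; field; rewrite expf_neq0.
Qed.

Lemma measurable_inv (R : realType) : measurable_fun [set: R] (@GRing.inv R).
Proof.
have -> : @GRing.inv R = (fun y => if y == 0 then 0 else y^-1).
  by apply/funext => y; case: eqP => [->|]; rewrite ?invr0.
apply: measurable_fun_if => //; first exact: measurable_fun_eqr.
rewrite setTI; apply: open_continuous_measurable_fun => [|y].
  have -> : (fun y : R => y == 0) @^-1` [set false] = ~` [set 0].
    by apply/seteqP; split => y /=; case: eqP.
  by rewrite openC; apply: compact_closed; [exact: Rhausdorff|exact: compact_set1].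
by rewrite inE /= => /negbT; exact: inv_continuous.
Qed.

Section FDivergenceIntegrand.
Context {R : realType}.
Implicit Types (f : R -> R) (a b : R).

Lemma measurable_fdiv_integrand d (T : measurableType d) f (p q : T -> R) :
  measurable_fun setT f -> measurable_fun setT p -> measurable_fun setT q ->
  measurable_fun setT (fun x => fdiv_integrand f (p x) (q x)).
Proof.
move=> mf mp mq; apply: measurable_fun_ifT; first exact: measurable_fun_ltr.
  apply/measurable_EFinP/measurable_funM => //.
  apply: measurableT_comp => //.
  by apply: measurable_funM => //; exact: measurableT_comp (@measurable_inv R) mp.
apply: measurable_fun_ifT; first exact: measurable_fun_eqr.
  exact: measurable_cst.
by apply: emeasurable_funM; [exact/measurable_EFinP|exact: measurable_cst].
Qed.

Lemma fdiv_integrand_horner (P : {poly R}) n a b :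
  (size P <= n)%N -> P.[1] = 0 -> (P^`()).[1] = 0 ->
  chi_integrand 2 a b \is a fin_num ->
  fdiv_integrand (horner P) a b =
    (\sum_(2 <= i < n) (P^`N(i).[1])%:E * chi_integrand i a b)%E.
Proof.
move=> szP P1 dP1; rewrite /fdiv_integrand /chi_integrand.
have [a_gt0 _|_] := ltP 0 a.
  under eq_bigr do rewrite -EFinM.
  by rewrite sumEFin (mul_horner_div_chi _ _ szP P1 dP1) // gt_eqF.
by case: eqP => // _ _; rewrite big1 // => i _; rewrite mule0.
Qed.

End FDivergenceIntegrand.

Section IntegralSumIn.
Local Open Scope ereal_scope.
Context {d} {T : measurableType d} {R : realType} {mu : {measure set T -> \bar R}}.
Context {D : set T} (mD : measurable D) {I : eqType} {f : I -> T -> \bar R}.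

Lemma integrable_sum_in (s : seq I) :
  (forall i, i \in s -> mu.-integrable D (f i)) ->
  mu.-integrable D (fun x => \sum_(i <- s) f i x).
Proof.
move=> fs_int; apply: eq_integrable mD _ _ _ (integrable_sum mD s fs_int) => x _.
by rewrite -big_seq.
Qed.

Lemma integral_sum_in (s : seq I) :
  (forall i, i \in s -> mu.-integrable D (f i)) ->
  \int[mu]_(x in D) (\sum_(i <- s) f i x) = \sum_(i <- s) \int[mu]_(x in D) f i x.
Proof.
elim: s => [_|j s IHs fs_int].
  by under eq_integral do rewrite big_nil; rewrite integral0 big_nil.
have s_int i : i \in s -> mu.-integrable D (f i).
  by move=> si; apply: fs_int; rewrite inE si orbT.
under eq_integral do rewrite big_cons.
rewrite integralD // ?big_cons ?IHs //; last exact: integrable_sum_in.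
by apply: fs_int; rewrite inE eqxx.
Qed.

End IntegralSumIn.

Lemma fdiv_chi_expansion {R : realType} {P : {poly R}} {n : nat}
    d (T : measurableType d) (mu : {measure set T -> \bar R}) (p q : T -> R) :
  (size P <= n)%N -> (2 < n)%N -> P.[1] = 0 -> (P^`()).[1] = 0 ->
  measurable_fun setT p -> measurable_fun setT q ->
  (forall i, (2 <= i < n)%N -> chi_pm_finite mu i p q) ->
  fdiv mu (horner P) p q = (\sum_(2 <= i < n) (P^`N(i).[1])%:E * chi_pm mu i p q)%E.
Proof.
move=> szP n_gt2 P1 dP1 mp mq chi_fin.
have term_int i : i \in index_iota 2 n -> mu.-integrable setT
    (fun x => (P^`N(i).[1])%:E * chi_integrand i (p x) (q x))%E.
  by rewrite mem_index_iota => /chi_fin; exact: integrableZl.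
transitivity (\int[mu]_x
    \sum_(2 <= i < n) (P^`N(i).[1])%:E * chi_integrand i (p x) (q x))%E.
  apply: ae_eq_integral => //.
  - apply: measurable_fdiv_integrand mp mq.
    by apply: continuous_measurable_fun; exact: continuous_horner.
  - exact: measurable_int (integrable_sum_in measurableT _ term_int).
  apply: filterS (integrable_ae measurableT (chi_fin 2 _)) => [x chi2_fin _|].
    exact: fdiv_integrand_horner (chi2_fin I).
  by rewrite leqnn.
rewrite integral_sum_in //; apply: eq_big_seq => i i_range.
by rewrite integralZl //; move: i_range; rewrite mem_index_iota => /chi_fin.
Qed.

Lemma sum_alternating_binomial (R : comPzRingType) i : (0 < i)%N ->
  \sum_(0 <= s < i.+1) (-1) ^+ (i - s) * 'C(i, s)%:R = 0 :> R.
Proof.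
move=> i_gt0; transitivity ((-1 + 1 : R) ^+ i); last by rewrite addNr expr0n gtn_eqF.
rewrite exprDn big_mkord.
by apply: eq_bigr => s _; rewrite expr1n mulr1 mulr_natr.
Qed.

Lemma chi_integrand_expR (R : realType) i (a b : R) : (0 < i)%N ->
  chi_integrand i (expR a) (expR b) =
  (\sum_(0 <= s < i.+1) (-1) ^+ (i - s) * 'C(i, s)%:R *
     expR (s%:R * b + (1 - s%:R) * a))%:E.
Proof.
move=> i_gt0; rewrite /chi_integrand expR_gt0; congr EFin.
rewrite addrC exprDn -(big_mkord xpredT (fun s =>
  (- expR a) ^+ (i - s) * expR b ^+ s *+ 'C(i, s))) mulr_suml.
apply: eq_big_nat => s; rewrite ltnS => /andP[_ s_le_i].
rewrite (exprNn (expR a)) -!expRM_natl -expRN.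
have -> : s%:R * b + (1 - s%:R) * a = (i - s)%:R * a + s%:R * b - i.-1%:R * a.
  have iE : i%:R = i.-1%:R + 1 :> R by rewrite natr1 prednK.
  by rewrite (natrB _ s_le_i) iE; ring.
by rewrite !expRD -mulr_natr; ring.
Qed.

Lemma chi_integrand_indic_expR (R : realType) i (c : bool) (a b : R) : (0 < i)%N ->
  chi_integrand i (c%:R * expR a) (c%:R * expR b) =
  (\sum_(0 <= s < i.+1) (-1) ^+ (i - s) * 'C(i, s)%:R *
     (c%:R * expR (s%:R * b + (1 - s%:R) * a)))%:E.
Proof.
move=> i_gt0; case: c.
  rewrite !mulr1n !mul1r chi_integrand_expR //.
  by congr EFin; apply: eq_bigr => s _; rewrite mul1r.
rewrite !mulr0n !mul0r /chi_integrand ltxx eqxx big1 // => s _.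
by rewrite mul0r mulr0.
Qed.

Lemma dotv_affine (R : realType) D (u a b : 'rV[R]_D) (l : R) :
  dotv u ((1 - l) *: a + l *: b) = (1 - l) * dotv u a + l * dotv u b.
Proof.
by rewrite /dotv !mulr_sumr -big_split; apply: eq_bigr => i _ /=; rewrite !mxE; ring.
Qed.

Section ExponentialFamily.
Context {R : realType} {d} {T : measurableType d} (mu : {measure set T -> \bar R}).
Context {D : nat} (t : T -> 'rV[R]_D) (k : T -> R) (X : set T).
Hypotheses (mX : measurable X) (mk : measurable_fun setT k)
  (mt : forall i : 'I_D, measurable_fun setT (fun x => t x 0 i)).

Local Notation F := (lognormalizer mu t k X).
Local Notation Z th := (\int[mu]_x (ef_unnorm t k X th x)%:E)%E.

Lemma measurable_dotv th : measurable_fun setT (fun x => dotv (t x) th).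
Proof.
by apply: measurable_sum => i; apply: measurable_funM => //; exact: measurable_cst.
Qed.

Lemma measurable_ef_unnorm th : measurable_fun setT (ef_unnorm t k X th).
Proof.
apply: measurable_funM; first exact: measurable_indic.
apply: measurableT_comp; first exact: measurable_expR.
by apply: measurable_funD => //; exact: measurable_dotv.
Qed.

Lemma measurable_ef_density th : measurable_fun setT (ef_density mu t k X th).
Proof.
apply: measurable_funM; first exact: measurable_indic.
apply: measurableT_comp; first exact: measurable_expR.
apply: measurable_funD => //; apply: measurable_funD; first exact: measurable_dotv.
exact: measurable_cst.
Qed.

Lemma ef_unnorm_ge0 th x : 0 <= ef_unnorm t k X th x.
Proof. by rewrite mulr_ge0 ?expR_ge0 // indicE ler0n. Qed.

Lemma integrable_ef_unnorm th : natural_params mu t k X th ->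
  mu.-integrable setT (fun x => (ef_unnorm t k X th x)%:E).
Proof.
move=> th_nat; apply/integrableP; split; first exact/measurable_EFinP/measurable_ef_unnorm.
under eq_integral do rewrite gee0_abs ?lee_fin ?ef_unnorm_ge0 //.
exact: th_nat.
Qed.

Lemma ef_partition_eq0 th : mu X = 0 -> Z th = 0%E.
Proof.
move=> muX0; rewrite -(integral0 mu setT); apply: ae_eq_integral => //.
- exact/measurable_EFinP/measurable_ef_unnorm.
exists X; split => // x /= Zx; apply: contrapT => Xx; apply: Zx => _.
by rewrite /ef_unnorm indicE memNset // mul0r.
Qed.

Lemma ef_partitionE th : mu X != 0 -> natural_params mu t k X th ->
  Z th = (expR (F th))%:E.
Proof.
move=> muX_neq0 th_nat; have Z_ge0 : (0 <= Z th)%E.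
  by apply: integral_ge0 => x _; rewrite lee_fin ef_unnorm_ge0.
have Z_fin : Z th \is a fin_num by rewrite ge0_fin_numE.
rewrite /lognormalizer lnK ?fineK // posrE -lte_fin fineK // lt0e Z_ge0 andbT.
apply: contra muX_neq0 => /eqP Z0.
have [N [mN N0 ZN]] : ae_eq mu setT (fun x => (ef_unnorm t k X th x)%:E) (cst 0%E).
  apply/ae_eq_integral_abs => //; first exact/measurable_EFinP/measurable_ef_unnorm.
  rewrite -Z0; apply: eq_integral => x _; rewrite gee0_abs // lee_fin.
  exact: ef_unnorm_ge0.
apply/eqP/(subset_measure0 mX mN _ N0) => x Xx; apply: ZN => /(_ I) /=.
by rewrite /ef_unnorm indicE mem_set // mul1r => -[] /eqP; rewrite gt_eqF ?expR_gt0.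
Qed.

Variables thp thq : 'rV[R]_D.
Hypotheses (params_affine : affine_set (natural_params mu t k X))
  (thp_nat : natural_params mu t k X thp) (thq_nat : natural_params mu t k X thq).

Let theta (s : nat) := (1 - s%:R) *: thp + s%:R *: thq.
Let p := ef_density mu t k X thp.
Let q := ef_density mu t k X thq.

Let theta_nat s : natural_params mu t k X (theta s).
Proof. exact: params_affine. Qed.

Lemma chi_integrand_ef_density i x : (0 < i)%N ->
  chi_integrand i (p x) (q x) =
  (\sum_(0 <= s < i.+1)
     ((-1) ^+ (i - s) * 'C(i, s)%:R *
        expR (- ((1 - s%:R) * F thp + s%:R * F thq)))%:E *
     (ef_unnorm t k X (theta s) x)%:E)%E.
Proof.
move=> i_gt0; rewrite /p /q /ef_density indicE chi_integrand_indic_expR // -sumEFin.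
apply: eq_bigr => s _; rewrite -EFinM /ef_unnorm indicE dotv_affine -!mulrA.
congr (EFin (_ * (_ * _))); rewrite mulrCA -expRD; congr (_ * expR _); ring.
Qed.

Lemma chi_pm_finite_ef_density i : (0 < i)%N -> chi_pm_finite mu i p q.
Proof.
move=> i_gt0; apply: (eq_integrable measurableT _ _
  (fun x _ => esym (chi_integrand_ef_density i x i_gt0))).
apply: integrable_sum => // s _; apply: integrableZl => //.
exact/integrable_ef_unnorm/theta_nat.
Qed.

Lemma chi_pm_ef_density i : (0 < i)%N ->
  chi_pm mu i p q =
  (\sum_(0 <= s < i.+1) (-1) ^+ (i - s) * 'C(i, s)%:R *
     expR (F (theta s) - ((1 - s%:R) * F thp + s%:R * F thq)))%:E.
Proof.
move=> i_gt0; have Z_int s : mu.-integrable setT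
    (fun x => (ef_unnorm t k X (theta s) x)%:E) by exact/integrable_ef_unnorm/theta_nat.
rewrite /chi_pm; under eq_integral do rewrite chi_integrand_ef_density //.
rewrite integral_sum //; last by move=> s; exact: integrableZl.
under eq_bigr do rewrite integralZl //.
(* If [mu X = 0], every partition function vanishes and [F] is constantly
   the junk value [ln 0]. *)
have [muX0|muX_neq0] := eqVneq (mu X) 0.
  have F_ln0 th : F th = ln 0 by rewrite /lognormalizer ef_partition_eq0.
  rewrite big1; last by move=> s _; rewrite ef_partition_eq0 // mule0.
  rewrite -[LHS]/(0%:E) -{1}(sum_alternating_binomial R i i_gt0); congr EFin.
  apply: eq_bigr => s _; rewrite !F_ln0.
  by rewrite [X in expR X](_ : _ = 0) ?expR0 ?mulr1 //; ring.
rewrite -sumEFin; apply: eq_bigr => s _.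
by rewrite ef_partitionE // -EFinM [F (theta s) - _]addrC expRD mulrA.
Qed.

End ExponentialFamily.

Theorem theorem2 (R : realType) (P : {poly R}) (dg : nat)
  (Hdeg : size P = dg.+1) (Hdg : (2 <= dg)%N)
  (Hconv : convex_on_pos (fun u => P.[u]))
  (Hstrict : strictly_convex_at1 (fun u => P.[u]))
  (Hf1 : P.[1] = 0) (Hdf1 : (P^`()).[1] = 0) :
  (forall (d : measure_display) (T : measurableType d)
          (mu : {measure set T -> \bar R}) (p q : T -> R),
     sigma_finite setT mu ->
     is_density mu p -> is_density mu q ->
     (forall i, (2 <= i <= dg)%N -> chi_pm_finite mu i p q) ->
     fdiv mu (fun u => P.[u]) p q =
       (\sum_(2 <= i < dg.+1)
          (\sum_(i <= j < dg.+1) P`_j * 'C(j, i)%:R)%:E * chi_pm mu i p q)%E)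
  /\
  (forall (d : measure_display) (T : measurableType d)
          (mu : {measure set T -> \bar R}) (D : nat)
          (t : T -> 'rV[R]_D) (k : T -> R) (X : set T)
          (thp thq : 'rV[R]_D),
     sigma_finite setT mu ->
     measurable X -> measurable_fun setT k ->
     (forall i : 'I_D, measurable_fun setT (fun x => t x 0 i)) ->
     affine_set (natural_params mu t k X) ->
     natural_params mu t k X thp -> natural_params mu t k X thq ->
     let F := lognormalizer mu t k X in
     let p := ef_density mu t k X thp in
     let q := ef_density mu t k X thq in
     (forall i, (2 <= i <= dg)%N -> chi_pm_finite mu i p q) /\
     fdiv mu (fun u => P.[u]) p q =
       (\sum_(2 <= i < dg.+1)
          (\sum_(i <= j < dg.+1) P`_j * 'C(j, i)%:R) *
          \sum_(0 <= s < i.+1) (-1) ^+ (i - s) * 'C(i, s)%:R *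
             expR (F ((1 - s%:R) *: thp + s%:R *: thq)
                   - ((1 - s%:R) * F thp + s%:R * F thq)))%:E).
Proof.
have szP : (size P <= dg.+1)%N by rewrite Hdeg.
have coefE i : \sum_(i <= j < dg.+1) P`_j * 'C(j, i)%:R = P^`N(i).[1].
  by rewrite (horner1_nderivn szP).
have expansion d (T : measurableType d) (mu : {measure set T -> \bar R}) p q :
    measurable_fun setT p -> measurable_fun setT q ->
    (forall i, (2 <= i <= dg)%N -> chi_pm_finite mu i p q) ->
    fdiv mu (fun u => P.[u]) p q =
    (\sum_(2 <= i < dg.+1) (P^`N(i).[1])%:E * chi_pm mu i p q)%E.
  by move=> mp mq chi_fin; apply: fdiv_chi_expansion.
split.
  move=> d T mu p q _ [mp _ _] [mq _ _] chi_fin.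
  by under eq_bigr do rewrite coefE; exact: expansion.
move=> d T mu D t k X thp thq _ mX mk mt params_affine thp_nat thq_nat F p q.
have chi_fin i : (2 <= i <= dg)%N -> chi_pm_finite mu i p q.
  by case/andP => i_gt1 _; apply: chi_pm_finite_ef_density => //; exact: ltnW.
have mp : measurable_fun setT p by exact: measurable_ef_density.
have mq : measurable_fun setT q by exact: measurable_ef_density.
split => //; rewrite expansion // -sumEFin.
apply: eq_big_nat => i /andP[i_gt1 _].
by rewrite coefE chi_pm_ef_density ?EFinM //; exact: ltnW.
Qed.
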